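(* Let $n>1$ be an odd integer, $k\ge1$, and $p$ the smallest prime divisor of $n$. Then $\mathrm{C}^{n,k}_{\mathrm{RDH}}$ is $\frac{1}{p-1}$-secure against substitution attacks: for every function $\mathcal{F}:\mathbb{Z}_n^k\times\mathbb{Z}_n\to\mathbb{Z}_n^k\times\mathbb{Z}_n$, $$\Pr_{\mathbf{m},\mathbf{x}\leftarrow\mathbb{Z}_n^k,\ \mathbf{y}\leftarrow(\mathbb{Z}_n^* )^k}\big[\mathcal{F}(c)\ne c\ \wedge\ \mathcal{D}_{\mathbf{x}\|\mathbf{y}}(\mathcal{F}(c))\ne\bot\big]\le\frac{1}{p-1},\quad\text{where } c=\mathcal{E}_{\mathbf{x}\|\mathbf{y}}(\mathbf{m}).$$
   Context: For $\mathbf{y}\in(\mathbb{Z}_n^* )^k$ and $\mathbf{m}\in\mathbb{Z}_n^k$ let $\Upsilon_{\mathbf{y}}(\mathbf{m})=\sum_{i=1}^k m_iy_i\bmod n$. The code $\mathrm{C}^{n,k}_{\mathrm{RDH}}$ has source states $\mathbb{Z}_n^k$, keys $\mathbf{x}\|\mathbf{y}\in\mathbb{Z}_n^k\times(\mathbb{Z}_n^* )^k$, ciphertexts $\mathbf{c}\|t\in\mathbb{Z}_n^k\times\mathbb{Z}_n$, encryption $\mathcal{E}_{\mathbf{x}\|\mathbf{y}}(\mathbf{m})=(\mathbf{m}+\mathbf{x}\bmod n)\,\|\,\Upsilon_{\mathbf{y}}(\mathbf{m})$, and decryption $\mathcal{D}_{\mathbf{x}\|\mathbf{y}}(\mathbf{c}\|t)=\mathbf{c}-\mathbf{x}\bmod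 n$ if $\Upsilon_{\mathbf{y}}(\mathbf{c}-\mathbf{x})=t$ and $\bot$ otherwise. All random choices are uniform and independent; the forger $\mathcal{F}$ is an arbitrary (computationally unrestricted) function. *)

From HB Require Import structures.
From mathcomp Require Import all_boot all_order all_fingroup all_algebra.
Set Implicit Arguments. Unset Strict Implicit. Unset Printing Implicit Defensive.
Import GRing.Theory Num.Theory.
Local Open Scope ring_scope.

Definition vec (n k : nat) := {ffun 'I_k -> 'Z_n}.
Definition uvec (n k : nat) := {ffun 'I_k -> {unit 'Z_n}}.
Definition ctext (n k : nat) := (vec n k * 'Z_n)%type.

Definition Upsilon n k (y : uvec n k) (m : vec n k) : 'Z_n :=
  \sum_(i < k) m i * val (y i).

Definition Enc n k (x : vec n k) (y : uvec n k) (m : vec n k) : ctext n k :=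
  ([ffun i => m i + x i], Upsilon y m).

(* None plays the role of bottom *)
Definition Dec n k (x : vec n k) (y : uvec n k) (ct : ctext n k) : option (vec n k) :=
  let d := [ffun i => ct.1 i - x i] in
  if Upsilon y d == ct.2 then Some d else None.

(* Success probability of the substitution forger F, with m, x uniform in
   Z_n^k and y uniform in units^k, all independent. *)
Definition subst_success n k (F : ctext n k -> ctext n k) : rat :=
  (#|[set w : vec n k * vec n k * uvec n k |
        let: (m, x, y) := w in
        let c := Enc x y m in (F c != c) && (Dec x y (F c) != None)]|%:R)
  / (#|{: vec n k * vec n k * uvec n k}|%:R).

From HB Require Import structures.
From mathcomp Require Import all_boot all_order all_fingroup all_algebra.
From mathcomp Require Import zify.
Set Implicit Arguments. Unset Strict Implicit. Unset Printing Implicit Defensive.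
Import GRing.Theory Num.Theory.
Local Open Scope ring_scope.

(** Let [p = pdiv n].  Given a successful triple [(m, x, y)] with ciphertext
    [c], pick a coordinate [i] where [F c] changes the message part, and for
    [j = 1, ..., p - 1] (all units of [Z_n]) divide [m_i] by [j], multiply
    [y_i] by [j] and readjust [x]: the ciphertext is unchanged.  These
    rescalings are injective on (successful triple, [j]).  If the images of
    [(y, j)] and [(y', j')] agree, both keys accept [F c], so with
    [delta = (F c).1 - c.1] we get [delta_i y_i = delta_i y'_i], while
    [y_i j = y'_i j']; hence [delta_i y_i (j - j') = 0], and [j - j'] is a
    unit because [|j - j'| < p], so [j = j'] since [delta_i <> 0].  Thus
    [(p - 1)] times the number of successes is at most the size of the
    sample space. *)

Lemma unitZp_lt_pdiv (n a : nat) :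
  (1 < n)%N -> (0 < a < pdiv n)%N -> (a%:R : 'Z_n) \is a GRing.unit.
Proof.
move=> n_gt1 /andP[a_gt0 a_lt_p]; rewrite unitZpE //; apply/negPn/negP => not_coprime.
have gcd_gt1 : (1 < gcdn n a)%N.
  by rewrite ltn_neqAle eq_sym not_coprime gcdn_gt0 a_gt0 orbT.
have := leq_trans (pdiv_min_dvd gcd_gt1 (dvdn_gcdl n a)) (dvdn_leq a_gt0 (dvdn_gcdr n a)).
by rewrite leqNgt a_lt_p.
Qed.

Lemma scaled_collision_eq0 (R : comUnitRingType) (d a b u v : R) :
  a \is a GRing.unit -> u - v \is a GRing.unit ->
  d * a = d * b -> a * u = b * v -> d = 0.
Proof.
move=> a_unit uv_unit da_db au_bv.
have annihilated : d * a * (u - v) = 0.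
  by rewrite mulrBr -mulrA au_bv mulrA -da_db -mulrA subrr.
apply: (mulIr a_unit); apply: (mulIr uv_unit).
by rewrite annihilated !mul0r.
Qed.

Lemma ratio_le_inv_pred (R : numFieldType) (a t p : nat) :
  (1 < p)%N -> (a * p.-1 <= t)%N -> (a%:R / t%:R : R) <= 1 / (p%:R - 1).
Proof.
move=> p_gt1 bound.
have -> : (p%:R - 1 : R) = p.-1%:R by rewrite -{1}(prednK (ltnW p_gt1)) -natr1 addrK.
have p1_gt0 : (0 < p.-1%:R :> R) by rewrite ltr0n -ltnS prednK // ltnW.
case: (posnP t) => [->|t_gt0]; first by rewrite invr0 mulr0 mul1r invr_ge0 ler0n.
by rewrite mul1r ler_pdivrMr ?ltr0n // mulrC ler_pdivlMr // -natrM ler_nat.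
Qed.

Section SmallUnits.
Variables (n : nat) (n_gt1 : (1 < n)%N).

Definition small_unit (j : 'I_(pdiv n).-1) : {unit 'Z_n} := insubd (1%g : {unit 'Z_n}) j.+1%:R.

Lemma small_unit_bounds (j : 'I_(pdiv n).-1) : (0 < j.+1 < pdiv n)%N.
Proof. by have := ltn_ord j; have := pdiv_gt0 n; lia. Qed.

Lemma val_small_unit j : val (small_unit j) = j.+1%:R.
Proof. by rewrite insubdK // unitZp_lt_pdiv ?small_unit_bounds. Qed.

Lemma small_unit_subr_unit j1 j2 :
  j1 != j2 -> val (small_unit j1) - val (small_unit j2) \is a GRing.unit.
Proof.
have := small_unit_bounds j1; have := small_unit_bounds j2.
rewrite !val_small_unit => j2_bounds j1_bounds j1_neq_j2.
case: (ltngtP j1 j2) => [lt|lt|/val_inj eq]; last by rewrite eq eqxx in j1_neq_j2.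
- by rewrite -opprB unitrN -natrB ?unitZp_lt_pdiv //; lia.
- by rewrite -natrB ?unitZp_lt_pdiv //; lia.
Qed.

End SmallUnits.

Section Code.
Variables (n k : nat).
Implicit Types (m x : vec n k) (y : uvec n k) (c : ctext n k).

Lemma UpsilonB y (a b : vec n k) : Upsilon y (a - b) = Upsilon y a - Upsilon y b.
Proof. by rewrite /Upsilon -sumrB; apply: eq_bigr => l _; rewrite !ffunE mulrBl. Qed.

Lemma Enc_fst x y m : (Enc x y m).1 = m + x.
Proof. by apply/ffunP => l; rewrite !ffunE. Qed.

Lemma Dec_accepts x y c : (Dec x y c != None) = (Upsilon y (c.1 - x) == c.2).
Proof.
have -> : c.1 - x = [ffun l => c.1 l - x l] by apply/ffunP => l; rewrite !ffunE.
by rewrite /Dec /=; case: ifP.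
Qed.

Lemma accepted_shift x y m c :
  Dec x y c != None -> Upsilon y (c.1 - (Enc x y m).1) = c.2 - (Enc x y m).2.
Proof.
rewrite Dec_accepts Enc_fst => /eqP accepted.
by rewrite opprD addrA addrAC UpsilonB accepted.
Qed.

Lemma accepted_forgery_fst x y m c :
  c != Enc x y m -> Dec x y c != None -> c.1 != (Enc x y m).1.
Proof.
move=> c_new; rewrite Dec_accepts; apply: contraTneq => same_fst.
move: c_new; rewrite same_fst Enc_fst addrK; case: c same_fst => c1 t /= ->.
by apply: contraNneq => <-.
Qed.

Lemma Upsilon_eq_at y1 y2 d i :
  (forall l, l != i -> y1 l = y2 l) -> Upsilon y1 d = Upsilon y2 d ->
  d i * val (y1 i) = d i * val (y2 i).
Proof.
move=> y_off_i; rewrite /Upsilon (bigD1 i) //= [in RHS](bigD1 i) //=.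
rewrite (eq_bigr (fun l => d l * val (y2 l))) => [|l /y_off_i -> //].
exact: addIr.
Qed.

Definition rescale (i : 'I_k) (u : {unit 'Z_n}) (w : vec n k * vec n k * uvec n k) :=
  let: (m, x, y) := w in
  let m' := [ffun l => if l == i then m l / val u else m l] in
  (m', m + x - m', [ffun l => if l == i then (y l * u)%g else y l]).

Definition ciphertext (w : vec n k * vec n k * uvec n k) : ctext n k :=
  let: (m, x, y) := w in Enc x y m.

Lemma ciphertext_rescale i u w : ciphertext (rescale i u w) = ciphertext w.
Proof.
case: w => [[m x] y]; rewrite /ciphertext /= /Enc; congr pair.
  by apply/ffunP => l; rewrite !ffunE addrC subrK.
rewrite /Upsilon; apply: eq_bigr => l _; rewrite !ffunE.
case: ifP => // _; rewrite FinRing.val_unitM [val (y l) * _]mulrC mulrA divrK //.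
exact: valP.
Qed.

Lemma rescale_inj i u : injective (rescale i u).
Proof.
move=> [[m1 x1] y1] [[m2 x2] y2] [eq_m' eq_x' eq_y'].
have u_inv_unit : (val u)^-1 \is a GRing.unit by rewrite unitrV; exact: valP.
have eq_m : m1 = m2.
  apply/ffunP => l; move/ffunP: eq_m' => /(_ l); rewrite !ffunE.
  by case: eqP => // _ /(mulIr u_inv_unit).
have eq_y : y1 = y2.
  apply/ffunP => l; move/ffunP: eq_y' => /(_ l); rewrite !ffunE.
  by case: eqP => // _ /mulIg.
by move: eq_x'; rewrite eq_m' eq_m => /subIr /addrI ->; rewrite eq_y.
Qed.

End Code.
Arguments ciphertext {n k}.

Section Forger.
Variables (n k : nat) (n_gt1 : (1 < n)%N) (F : ctext n k -> ctext n k).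
Local Notation sample := (vec n k * vec n k * uvec n k)%type.
Implicit Types w : sample.

Definition forgeries := [set w : sample | let: (m, x, y) := w in
  let c := Enc x y m in (F c != c) && (Dec x y (F c) != None)].

Definition forged_slot (c : ctext n k) : option 'I_k := [pick l | (F c).1 l != c.1 l].

Lemma forged_slot_some w : w \in forgeries ->
  exists2 i, forged_slot (ciphertext w) = Some i &
             (F (ciphertext w)).1 i != (ciphertext w).1 i.
Proof.
case: w => [[m x] y]; rewrite inE /= => /andP[c_new accepted].
rewrite /forged_slot; case: pickP => [i moved|unmoved]; first by exists i.
case/negP: (accepted_forgery_fst c_new accepted); apply/eqP/ffunP => l.
by apply/eqP/negbFE; rewrite unmoved.
Qed.

Lemma rescale_collision_nonunit i u1 u2 w1 w2 :
  w1 \in forgeries -> w2 \in forgeries -> forged_slot (ciphertext w1) = Some i ->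
  rescale i u1 w1 = rescale i u2 w2 -> val u1 - val u2 \isn't a GRing.unit.
Proof.
move=> forged1 forged2 slot1 same_image.
have same_c := congr1 ciphertext same_image; rewrite !ciphertext_rescale in same_c.
have [i' slot1' moved] := forged_slot_some forged1.
move: slot1'; rewrite slot1 => -[eq_i]; subst i'; clear slot1.
move: same_image same_c forged1 forged2 moved; case: w1 => [[m1 x1] y1].
case: w2 => [[m2 x2] y2]; rewrite !inE /ciphertext /= => -[_ _ eq_y] same_c.
move=> /andP[_ accepted1] /andP[_ accepted2] moved.
set d := (F (Enc x1 y1 m1)).1 - (Enc x1 y1 m1).1.
have same_shift : Upsilon y1 d = Upsilon y2 d.
  have := accepted_shift m2 accepted2; rewrite -same_c => ->.
  exact: accepted_shift.
have y_off_i l : l != i -> y1 l = y2 l.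
  by move=> /negbTE l_ne_i; move/ffunP: eq_y => /(_ l); rewrite !ffunE l_ne_i.
have y_at_i : val (y1 i) * val u1 = val (y2 i) * val u2.
  by move/ffunP: eq_y => /(_ i); rewrite !ffunE eqxx => /(congr1 val); rewrite !FinRing.val_unitM.
have d_i_neq0 : d i != 0 by move: moved; rewrite -subr_eq0 /d !ffunE.
apply/negP => u_diff_unit; move/eqP: d_i_neq0; apply.
exact: scaled_collision_eq0 (valP (y1 i)) u_diff_unit (Upsilon_eq_at y_off_i same_shift) y_at_i.
Qed.

Definition rescale_by_small_unit (wj : sample * 'I_(pdiv n).-1) : sample :=
  let: (w, j) := wj in
  if forged_slot (ciphertext w) is Some i then rescale i (small_unit j) w else w.

Lemma rescale_by_small_unit_inj :
  {in setX forgeries [set: 'I_(pdiv n).-1] &, injective rescale_by_small_unit}.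
Proof.
move=> [w1 j1] [w2 j2] /setXP[forged1 _] /setXP[forged2 _] /=.
have [i slot1 _] := forged_slot_some forged1.
have [i2 slot2 _] := forged_slot_some forged2.
rewrite slot1 slot2 => same_image.
have := congr1 (forged_slot \o ciphertext) same_image.
rewrite /= !ciphertext_rescale slot1 slot2 => -[eq_i]; subst i2.
have eq_j : j1 = j2.
  apply/eqP; apply: contraNT (rescale_collision_nonunit forged1 forged2 slot1 same_image).
  exact: small_unit_subr_unit.
by subst j2; rewrite (rescale_inj same_image).
Qed.

Lemma card_forgeries_bound : (#|forgeries| * (pdiv n).-1 <= #|{: sample}|)%N.
Proof.
rewrite -[X in (_ * X)%N]card_ord -cardsT -cardsX.
by rewrite -(card_in_imset rescale_by_small_unit_inj) max_card.
Qed.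

End Forger.

Theorem mainTheorem7 (n k : nat) (Hn : (1 < n)%N) (Hodd : odd n) (Hk : (0 < k)%N)
  (F : ctext n k -> ctext n k) :
  subst_success F <= 1 / ((pdiv n)%:R - 1 : rat).
Proof.
apply: ratio_le_inv_pred; first exact/prime_gt1/pdiv_prime.
exact: card_forgeries_bound.
Qed.
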